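(* Let $M \in \mathbb{C}^{n\times n}$ be positive semi-definite and let $Q$ be a stochastic block decomposition of size $\alpha$ in $\mathbb{C}^{n\times n}$. Let $\lambda(M) = (\lambda_1,\dots,\lambda_n)$ be the eigenvalues of $M$ in non-increasing order and $\beta(M) = (\beta_1,\dots,\beta_n)$ with $\beta_j = \alpha\,\mathbb{E}[\lambda_j(QMQ)]$. Then $\lambda(M) \prec \beta(M)$.
   Context: A stochastic block decomposition of size $\alpha$ in $\mathbb{C}^{n\times n}$ is a random variable $Q$ on a probability space taking values in the set of orthogonal projection matrices in $\mathbb{C}^{n\times n}$ such that the entrywise expectation satisfies $\mathbb{E}[Q] = \alpha^{-1}I$. $\lambda_j(X)$ denotes the $j$-th largest eigenvalue of a Hermitian matrix $X$. For $x,y\in\mathbb{R}^n$, $x \prec y$ ($x$ is majorized by $y$) means that after sorting both in non-increasing order, $\sum_{i=1}^k x_i \le \sum_{i=1}^k y_i$ for $1\le k\le n-1$ and $\sum_{i=1}^n x_i = \sum_{i=1}^n y_i$. *)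

From HB Require Import structures.
From mathcomp Require Import all_boot all_order all_algebra.
From mathcomp Require Import sesquilinear spectral.
From mathcomp Require Import complex.
From mathcomp Require Import all_classical all_reals.
From mathcomp Require Import measure lebesgue_measure lebesgue_integral probability.
Set Implicit Arguments. Unset Strict Implicit. Unset Printing Implicit Defensive.
Import Order.TTheory GRing.Theory Num.Theory.
Local Open Scope ring_scope.

Definition psdmx (R : rcfType) (n : nat) (M : 'M[R[i]]_n) : Prop :=
  M \is hermsymmx /\
  forall v : 'rV[R[i]]_n, 0 <= (v *m M *m (map_mx Num.conj v)^T) 0 0.

Definition orth_proj (R : rcfType) (n : nat) (P : 'M[R[i]]_n) : Prop :=
  P \is hermsymmx /\ P *m P = P.

(* Eigenvalues of a Hermitian matrix listed in non-increasing order: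
   spectral_diag X is the diagonal of the unitary diagonalisation of X
   (real for Hermitian X); we take real parts and sort. *)
Definition eigvals (R : rcfType) (n : nat) (X : 'M[R[i]]_n) : seq R :=
  sort (fun x y : R => y <= x)
       [seq complex.Re (spectral_diag X 0 j) | j <- enum 'I_n].

(* lambda_j(X), j = 0..n-1 (0-based), j-th largest eigenvalue. *)
Definition eigval (R : rcfType) (n : nat) (X : 'M[R[i]]_n) (j : 'I_n) : R :=
  nth 0 (eigvals X) j.

Definition majorized (R : realDomainType) (n : nat) (x y : 'I_n -> R) : Prop :=
  let xs := sort (fun a b : R => b <= a) [seq x i | i <- enum 'I_n] in
  let ys := sort (fun a b : R => b <= a) [seq y i | i <- enum 'I_n] in
  (forall k : nat, (1 <= k <= n.-1)%N ->
     \sum_(i < k) nth 0 xs i <= \sum_(i < k) nth 0 ys i) /\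
  \sum_(i < n) nth 0 xs i = \sum_(i < n) nth 0 ys i.

Definition cexpect (d : measure_display) (T : measurableType d) (R : realType)
    (P : probability T R) (f : T -> R[i]) : R[i] :=
  Complex (\int[P]_w complex.Re (f w)) (\int[P]_w complex.Im (f w)).

Definition stoch_block_decomp (d : measure_display) (T : measurableType d)
    (R : realType) (P : probability T R) (n : nat) (alpha : R)
    (Q : T -> 'M[R[i]]_n) : Prop :=
  [/\ forall i j : 'I_n,
        measurable_fun setT (fun w => complex.Re (Q w i j)) /\
        measurable_fun setT (fun w => complex.Im (Q w i j)),
      forall w, orth_proj (Q w) &
      \matrix_(i, j) cexpect P (fun w => Q w i j)
        = (Complex alpha^-1 0 : R[i])%:M ].

(* Ky Fan's maximum principle: for Hermitian [A], the sum [eigsum A k] of the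
   [k] largest eigenvalues is the maximum of [Re tr (Z A)] over orthogonal
   projections [Z] of trace [k] (of trace at most [k] if [A] is positive
   semi-definite), attained at the spectral projection [top_proj A k].
   For a sample [Q], the projection onto the span of the rows [u_j Q], where
   the [u_j] are the top [k] eigenvectors of [M], has trace at most [k]; this
   gives [Re tr (top_proj M k * M * Q) <= eigsum (Q M Q) k].  The left-hand
   side is real-linear in [Q], so taking expectations with [E[Q] = alpha^-1 I]
   yields [eigsum M k <= alpha E[eigsum (Q M Q) k]], with equality of traces
   for [k = n].  The same principle makes [eigsum] Lipschitz in the matrix
   entries, which provides the measurability needed for the expectations. *)

From HB Require Import structures.
From mathcomp Require Import all_boot all_order all_algebra.
From mathcomp Require Import sesquilinear spectral complex.
From mathcomp Require Import all_classical all_reals.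
From mathcomp Require Import measure lebesgue_measure lebesgue_integral probability.
From mathcomp Require Import topology normedtype sequences measurable_realfun.
From mathcomp Require Import ring lra.
Import Order.TTheory GRing.Theory Num.Theory.
Local Open Scope ring_scope.
Set Implicit Arguments. Unset Strict Implicit. Unset Printing Implicit Defensive.

Section TopSum.
Variable R : realDomainType.
Local Notation ge := (fun x y : R => y <= x).

Lemma weighted_sum_le_sum_take_threshold (I : eqType) (s : seq I) (d w : I -> R)
    k t :
  (k <= size s)%N -> (forall j, 0 <= w j <= 1) ->
  {in take k s, forall j, t <= d j} -> {in drop k s, forall j, d j <= t} ->
  t * \sum_(j <- s) w j <= t * k%:R ->
  \sum_(j <- s) w j * d j <= \sum_(j <- take k s) d j.
Proof.
move=> ks w01 d_take d_drop tw.
have split_s (F : I -> R) :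
    \sum_(j <- s) F j = \sum_(j <- take k s) F j + \sum_(j <- drop k s) F j.
  by rewrite -big_cat cat_take_drop.
have le_take : \sum_(j <- take k s) w j * d j <=
               \sum_(j <- take k s) (d j - t + t * w j).
  rewrite big_seq [X in _ <= X]big_seq; apply: ler_sum => j /d_take tj.
  have /andP[w0 w1] := w01 j; nra.
have le_drop : \sum_(j <- drop k s) w j * d j <= \sum_(j <- drop k s) t * w j.
  rewrite big_seq [X in _ <= X]big_seq; apply: ler_sum => j /d_drop dj.
  have /andP[w0 _] := w01 j; nra.
have := lerD le_take le_drop.
rewrite -split_s !big_split /= sumrN big_const_seq count_predT size_takel //.
rewrite iter_addr_0 -!mulr_sumr.
rewrite (split_s w) mulrDr in tw; rewrite -mulr_natr; lra.
Qed.

Lemma weighted_sum_le_sum_take (I : eqType) (s : seq I) (d w : I -> R) k :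
  sorted (relpre d ge) s -> (k <= size s)%N -> (forall j, 0 <= w j <= 1) ->
  \sum_(j <- s) w j = k%:R \/ \sum_(j <- s) w j <= k%:R /\ (forall j, 0 <= d j) ->
  \sum_(j <- s) w j * d j <= \sum_(j <- take k s) d j.
Proof.
move=> s_sorted ks w01 sum_w.
case: k ks sum_w => [|k] ks sum_w.
  have : \sum_(j <- s) w j == 0.
    rewrite eq_le sumr_ge0 ?andbT => [|j _]; last by case/andP: (w01 j).
    by case: sum_w => [->|[]].
  rewrite psumr_eq0 => [/allP w0|j _]; last by case/andP: (w01 j).
  rewrite take0 big_nil big_seq big1 // => j /w0 /eqP ->; exact: mul0r.
case: s s_sorted ks sum_w => // x0 s' s_sorted ks sum_w.
set s := x0 :: s' in s_sorted ks sum_w *.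
have tr : transitive (relpre d ge) by move=> ? ? ? /= h1 h2; exact: le_trans h2 h1.
have nth_mono := sorted_leq_nth tr (fun j => lexx (d j)) x0 s_sorted.
apply: (@weighted_sum_le_sum_take_threshold _ _ _ _ _ (d (nth x0 s k))) => //.
- move=> j; case/(nthP x0) => i; rewrite size_takel // => ik <-.
  by rewrite nth_take //; apply: nth_mono; rewrite // inE (leq_trans ik).
- move=> j; case/(nthP x0) => i; rewrite size_drop => ik <-.
  rewrite nth_drop; apply: (nth_mono k (k.+1 + i)); rewrite ?inE //.
    by rewrite -ltn_subRL.
  exact: leq_trans (leqnSn k) (leq_addr i _).
- case: sum_w => [->//|[sw d_ge0]]; exact: ler_wpM2l.
Qed.

Definition top_indices n (d : 'I_n -> R) : seq 'I_n :=
  sort (relpre d ge) (enum 'I_n).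

Definition top_sum n (d : 'I_n -> R) k : R :=
  \sum_(i < k) nth 0 (sort ge [seq d j | j <- enum 'I_n]) i.

Lemma size_top_indices n (d : 'I_n -> R) : size (top_indices d) = n.
Proof. by rewrite size_sort size_enum_ord. Qed.

Lemma top_indices_sorted n (d : 'I_n -> R) : sorted (relpre d ge) (top_indices d).
Proof. by apply: sort_sorted => i j; exact: le_total. Qed.

Lemma perm_top_indices n (d : 'I_n -> R) : perm_eq (top_indices d) (enum 'I_n).
Proof. by rewrite perm_sort. Qed.

Lemma top_sumE n (d : 'I_n -> R) k : (k <= n)%N ->
  top_sum d k = \sum_(j <- take k (top_indices d)) d j.
Proof.
move=> kn; rewrite /top_sum sort_map -(big_map d xpredT id) map_take (big_nth 0).
rewrite size_takel ?size_map ?size_top_indices // big_mkord.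
by apply: eq_bigr => i _; rewrite nth_take.
Qed.

Lemma weighted_sum_le_top_sum n (d w : 'I_n -> R) k :
  (k <= n)%N -> (forall j, 0 <= w j <= 1) ->
  \sum_j w j = k%:R \/ \sum_j w j <= k%:R /\ (forall j, 0 <= d j) ->
  \sum_j w j * d j <= top_sum d k.
Proof.
move=> kn w01 sum_w; rewrite top_sumE //.
have reindex (F : 'I_n -> R) : \sum_j F j = \sum_(j <- top_indices d) F j.
  by rewrite (perm_big _ (perm_top_indices d)) big_enum.
rewrite reindex; apply: weighted_sum_le_sum_take => //.
- exact: top_indices_sorted.
- by rewrite size_top_indices.
- by rewrite -reindex.
Qed.

Lemma top_sum_nonincreasing n (d : 'I_n -> R) k : (k <= n)%N ->
  (forall i j : 'I_n, (i <= j)%N -> d j <= d i) ->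
  top_sum d k = \sum_(i < n | (i < k)%N) d i.
Proof.
move=> kn d_noninc; rewrite /top_sum sorted_sort; first last.
- have : sorted (relpre val leq) (enum 'I_n).
    by rewrite -sorted_map val_enum_ord iota_sorted.
  by rewrite sorted_map; apply: sub_sorted => i j /=; exact: d_noninc.
- by move=> ? ? ? h1 h2; exact: le_trans h2 h1.
rewrite (big_ord_widen n (fun i => nth 0 [seq d j | j <- enum 'I_n] i) kn).
by apply: eq_bigr => i _; rewrite (nth_map i) ?size_enum_ord // nth_ord_enum.
Qed.

Lemma nth_sort_noninc (s : seq R) i j : (i <= j)%N -> (j < size s)%N ->
  nth 0 (sort ge s) j <= nth 0 (sort ge s) i.
Proof.
move=> ij js; have tr : transitive ge by move=> ? ? ? h1 h2; exact: le_trans h2 h1.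
have srt : sorted ge (sort ge s) by apply: sort_sorted => x y; exact: le_total.
apply: (sorted_leq_nth tr (@lexx _ _) 0 srt); rewrite // inE size_sort //.
exact: leq_ltn_trans ij js.
Qed.

Lemma top_sum_mono n (d : 'I_n -> R) k k' : (forall j, 0 <= d j) -> (k <= k')%N ->
  top_sum d k <= top_sum d k'.
Proof.
move=> d_ge0 kk'; pose s := sort ge [seq d j | j <- enum 'I_n].
have nth_ge0 i : 0 <= nth 0 s i.
  have [is_|] := ltnP i (size s); last by move=> si; rewrite nth_default.
  by have := mem_nth 0 is_; rewrite mem_sort => /mapP[j _ ->].
rewrite /top_sum -/s (big_ord_widen k' (fun i => nth 0 s i) kk') big_mkcond /=.
by apply: ler_sum => i _; case: ifP.
Qed.

Lemma top_sum_ge0 n (d : 'I_n -> R) k : (forall j, 0 <= d j) -> 0 <= top_sum d k.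
Proof.
by move=> d_ge0; have := top_sum_mono d_ge0 (leq0n k); rewrite {1}/top_sum big_ord0.
Qed.

Lemma majorized_top_sum n (x y : 'I_n -> R) :
  (forall k, (k <= n)%N -> top_sum x k <= top_sum y k) ->
  top_sum x n = top_sum y n -> majorized x y.
Proof.
by move=> le_xy eq_xy; split=> // k /andP[_ /leq_trans/(_ (leq_pred n))/le_xy].
Qed.

End TopSum.

Lemma sum_indicator_mul (T : finType) (V : pzSemiRingType) (J : seq T) (F : T -> V) :
  uniq J -> \sum_j (j \in J)%:R * F j = \sum_(j <- J) F j.
Proof.
move=> uJ; rewrite [RHS]big_uniq // [RHS]big_mkcond; apply: eq_bigr => j _.
by case: (j \in J); rewrite ?mul1r ?mul0r.
Qed.

Local Open Scope sesquilinear_scope.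

Section ConjTranspose.
Variable C : numClosedFieldType.

Lemma trmxC_mul m n p (A : 'M[C]_(m, n)) (B : 'M[C]_(n, p)) :
  (A *m B)^t* = B^t* *m A^t*.
Proof. by rewrite trmx_mul map_mxM. Qed.

Lemma hermsymmxE n (A : 'M[C]_n) : (A \is hermsymmx) = (A^t* == A).
Proof.
apply/idP/eqP => [/is_hermitianmxP|hA].
  by rewrite expr0 scale1r => h; rewrite -h.
by apply/is_hermitianmxP; rewrite expr0 scale1r hA.
Qed.

Lemma unitarymx_trC_mul n (U : 'M[C]_n) : U \is unitarymx -> U^t* *m U = 1%:M.
Proof. by move=> uU; rewrite -(invmx_unitary uU) mulVmx // unitarymx_unit. Qed.

Lemma normal_spectral_decomp n (A : 'M[C]_n) : A \is normalmx ->
  A = (spectralmx A)^t* *m diag_mx (spectral_diag A) *m spectralmx A.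
Proof.
by move=> /orthomx_spectralP {1}->; rewrite invmx_unitary // spectral_unitarymx.
Qed.

Lemma mxtrace_mul_spectral n (U Z : 'M[C]_n) (D : 'rV[C]_n) :
  \tr (Z *m (U^t* *m diag_mx D *m U)) = \sum_j (U *m Z *m U^t*) j j * D 0 j.
Proof.
rewrite !mulmxA mxtrace_mulC !mulmxA; apply: eq_bigr => j _.
by rewrite mul_mx_diag mxE.
Qed.

Lemma mulmx_trC_diag m n (U : 'M[C]_(m, n)) (A : 'M[C]_n) j :
  (U *m A *m U^t*) j j = (row j U *m A *m (row j U)^t*) 0 0.
Proof. by rewrite -row_mul !mxE; apply: eq_bigr => l _; rewrite !mxE. Qed.

End ConjTranspose.

Section ComplexParts.
Variable R : rcfType.
Implicit Types x y z : R[i].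

Lemma cReD x y : complex.Re (x + y) = complex.Re x + complex.Re y.
Proof. by case: x; case: y. Qed.

Lemma cImD x y : complex.Im (x + y) = complex.Im x + complex.Im y.
Proof. by case: x; case: y. Qed.

Lemma cReN x : complex.Re (- x) = - complex.Re x. Proof. by case: x. Qed.
Lemma cImN x : complex.Im (- x) = - complex.Im x. Proof. by case: x. Qed.
Lemma cReJ x : complex.Re x^* = complex.Re x. Proof. by case: x. Qed.
Lemma cImJ x : complex.Im x^* = - complex.Im x. Proof. by case: x. Qed.

Lemma cReM x y :
  complex.Re (x * y) = complex.Re x * complex.Re y - complex.Im x * complex.Im y.
Proof. by case: x; case: y. Qed.

Lemma cImM x y :
  complex.Im (x * y) = complex.Re x * complex.Im y + complex.Im x * complex.Re y.
Proof. by case: x; case: y. Qed.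

Lemma cRe_mul_real x (r : R) : complex.Re (x * r%:C%C) = complex.Re x * r.
Proof. by rewrite cReM /= mulr0 subr0. Qed.

Lemma cRe_sum (I : Type) (s : seq I) (P : pred I) (F : I -> R[i]) :
  complex.Re (\sum_(i <- s | P i) F i) = \sum_(i <- s | P i) complex.Re (F i).
Proof. exact: (big_morph _ cReD). Qed.

Lemma cIm_sum (I : Type) (s : seq I) (P : pred I) (F : I -> R[i]) :
  complex.Im (\sum_(i <- s | P i) F i) = \sum_(i <- s | P i) complex.Im (F i).
Proof. exact: (big_morph _ cImD). Qed.

Definition sqrmodc z : R := complex.Re z ^+ 2 + complex.Im z ^+ 2.

Lemma sqrmodc_ge0 z : 0 <= sqrmodc z.
Proof. by rewrite addr_ge0 // sqr_ge0. Qed.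

Lemma mulcJ_sqrmod z : z * z^* = (sqrmodc z)%:C%C.
Proof.
apply/eqP; rewrite eq_complex cReM cImM cReJ cImJ /sqrmodc /=.
by apply/andP; split; apply/eqP; ring.
Qed.

Lemma sqrmodc_le1 z : sqrmodc z <= 1 ->
  `|complex.Re z| <= 1 /\ `|complex.Im z| <= 1.
Proof.
rewrite /sqrmodc => z_le1; rewrite !ler_norml.
have := sqr_ge0 (complex.Re z); have := sqr_ge0 (complex.Im z).
by split; apply/andP; split; nra.
Qed.

Lemma cRe_mul_le (z e : R[i]) eps :
  `|complex.Re z| <= 1 -> `|complex.Im z| <= 1 ->
  `|complex.Re e| <= eps -> `|complex.Im e| <= eps ->
  complex.Re (z * e) <= eps *+ 2.
Proof.
move=> z1 z2 e1 e2; rewrite cReM mulr2n.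
have le_eps (x y : R) : `|x| <= 1 -> `|y| <= eps -> `|x * y| <= eps.
  by move=> x1 y1; rewrite normrM -[eps]mul1r ler_pM.
have := le_eps _ _ z1 e1; have := le_eps _ _ z2 e2; rewrite !ler_norml.
move=> /andP[h1 h2] /andP[h3 h4]; lra.
Qed.

End ComplexParts.

Lemma Re_trace_mulE (R : rcfType) n (A B : 'M[R[i]]_n) :
  complex.Re (\tr (A *m B)) =
  \sum_(p : 'I_n * 'I_n) (complex.Re (A p.1 p.2) * complex.Re (B p.2 p.1) -
                          complex.Im (A p.1 p.2) * complex.Im (B p.2 p.1)).
Proof.
rewrite -(pair_big xpredT xpredT (fun a b =>
  complex.Re (A a b) * complex.Re (B b a) -
  complex.Im (A a b) * complex.Im (B b a))) /=.
rewrite /mxtrace cRe_sum; apply: eq_bigr => a _.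
by rewrite mxE cRe_sum; apply: eq_bigr => b _; rewrite cReM.
Qed.

Section OrthProj.
Variable R : rcfType.
Local Notation C := R[i].

Lemma orth_proj_unitary_conj n (U Z : 'M[C]_n) :
  U^t* *m U = 1%:M -> orth_proj Z -> orth_proj (U *m Z *m U^t*).
Proof.
move=> UU [hZ iZ]; split.
  rewrite hermsymmxE !trmxC_mul trmxCK; move: hZ; rewrite hermsymmxE => /eqP ->.
  by rewrite mulmxA.
by rewrite !mulmxA -(mulmxA (U *m Z) (U^t*) U) UU mulmx1 -(mulmxA U Z Z) iZ.
Qed.

Lemma orth_proj_diag n (W : 'M[C]_n) j : orth_proj W ->
  W j j = (\sum_l sqrmodc (W j l))%:C%C.
Proof.
move=> [hW iW]; rewrite -{1}iW mxE rmorph_sum; apply: eq_bigr => l _.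
by move: hW; rewrite hermsymmxE => /eqP hW; rewrite -{2}hW !mxE mulcJ_sqrmod.
Qed.

Lemma orth_proj_row_sqrmod_bounds n (W : 'M[C]_n) j : orth_proj W ->
  (forall l, sqrmodc (W j l) <= \sum_l sqrmodc (W j l)) /\
  \sum_l sqrmodc (W j l) <= 1.
Proof.
move=> oW; set s := \sum_l _.
(* [W = W *m W^t*] gives [W j j = s], hence [s ^+ 2 = sqrmodc (W j j) <= s]. *)
have le_s l : sqrmodc (W j l) <= s.
  by rewrite /s (bigD1 l) //= lerDl sumr_ge0 // => l' _; exact: sqrmodc_ge0.
have s_ge0 : 0 <= s := le_trans (sqrmodc_ge0 _) (le_s j).
split=> //; have := le_s j; rewrite {1}orth_proj_diag // -/s /sqrmodc /= expr0n addr0.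
nra.
Qed.

Lemma orth_proj_diag_bounds n (W : 'M[C]_n) j : orth_proj W ->
  0 <= complex.Re (W j j) <= 1.
Proof.
move=> oW; have [le_s s_le1] := orth_proj_row_sqrmod_bounds j oW.
by rewrite orth_proj_diag //= s_le1 andbT (le_trans (sqrmodc_ge0 _) (le_s j)).
Qed.

Lemma orth_proj_entry_bounds n (W : 'M[C]_n) a b : orth_proj W ->
  `|complex.Re (W a b)| <= 1 /\ `|complex.Im (W a b)| <= 1.
Proof.
move=> oW; have [le_s s_le1] := orth_proj_row_sqrmod_bounds a oW.
exact/sqrmodc_le1/(le_trans (le_s b)).
Qed.

Lemma Re_trace_orth_proj_le n (Q : 'M[C]_n) : orth_proj Q -> complex.Re (\tr Q) <= n%:R.
Proof.
move=> oQ; rewrite /mxtrace cRe_sum -[n in n%:R]card_ord -sumr_const.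
by apply: ler_sum => j _; case/andP: (orth_proj_diag_bounds j oQ).
Qed.

Lemma Re_mul_trC_ge0 m n (v : 'M[C]_(m, n)) i : 0 <= complex.Re ((v *m v^t*) i i).
Proof.
rewrite mxE cRe_sum; apply: sumr_ge0 => a _.
by rewrite !mxE mulcJ_sqrmod sqrmodc_ge0.
Qed.

Lemma orth_proj_quad_ge0 m n (v : 'M[C]_(m, n)) (Z : 'M[C]_n) i :
  orth_proj Z -> 0 <= complex.Re ((v *m Z *m v^t*) i i).
Proof.
case; rewrite hermsymmxE => /eqP hZ ZZ.
have -> : v *m Z *m v^t* = (v *m Z) *m (v *m Z)^t*.
  by rewrite trmxC_mul hZ -mulmxA -[in LHS]ZZ !mulmxA.
exact: Re_mul_trC_ge0.
Qed.

Lemma orth_proj_row_space m n (V : 'M[C]_(m, n)) :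
  exists Z : 'M[C]_n, [/\ orth_proj Z, complex.Re (\tr Z) <= m%:R & V *m Z = V].
Proof.
pose B := schmidt (row_base V); pose Z := B^t* *m B; exists Z.
have /unitarymxP BB : B \is unitarymx.
  by apply: schmidt_unitarymx; exact: rank_leq_col.
split.
- split; first by rewrite hermsymmxE trmxC_mul trmxCK.
  by rewrite !mulmxA -(mulmxA (B^t*) B) BB mulmx1.
- rewrite mxtrace_mulC BB mxtrace1 -(rmorph_nat (real_complex R)) /=.
  by rewrite ler_nat rank_leq_row.
- have /submxP[D ->] : (V <= B)%MS by rewrite -{1}(eq_row_base V) schmidt_sub.
  by rewrite /Z !mulmxA -(mulmxA D) BB mulmx1.
Qed.

End OrthProj.

Section Spectral.
Variable R : rcfType.
Local Notation C := R[i].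

Definition spectral_re n (A : 'M[C]_n) (j : 'I_n) : R :=
  complex.Re (spectral_diag A 0 j).

Definition eigsum n (A : 'M[C]_n) k : R := top_sum (spectral_re A) k.

Lemma spectral_diag_real n (A : 'M[C]_n) j : A \is hermsymmx ->
  spectral_diag A 0 j = (spectral_re A j)%:C%C.
Proof.
move=> hA; have /mxOverP := hermitian_spectral_diag_real hA.
by move/(_ 0 j)/RRe_real.
Qed.

Lemma Re_trace_mul_hermitian n (A Z : 'M[C]_n) : A \is hermsymmx ->
  complex.Re (\tr (Z *m A)) =
  \sum_j complex.Re ((spectralmx A *m Z *m (spectralmx A)^t*) j j) * spectral_re A j.
Proof.
move=> hA; rewrite {1}(normal_spectral_decomp (hermitian_normalmx hA)).
rewrite mxtrace_mul_spectral cRe_sum; apply: eq_bigr => j _.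
by rewrite spectral_diag_real // cRe_mul_real.
Qed.

Lemma psd_spectral_re_ge0 n (A : 'M[C]_n) : psdmx A -> forall j, 0 <= spectral_re A j.
Proof.
case=> hA A_ge0 j; set U := spectralmx A.
have UU : U *m U^t* = 1%:M by apply/unitarymxP; exact: spectral_unitarymx.
have diagA : U *m A *m U^t* = diag_mx (spectral_diag A).
  rewrite {1}(normal_spectral_decomp (hermitian_normalmx hA)) -/U !mulmxA UU.
  by rewrite mul1mx -mulmxA UU mulmx1.
have := A_ge0 (row j U).
by rewrite map_trmx -mulmx_trC_diag diagA mxE eqxx mulr1n spectral_diag_real // ler0c.
Qed.

Lemma kyfan_le n (A Z : 'M[C]_n) k : A \is hermsymmx -> orth_proj Z -> (k <= n)%N ->
  complex.Re (\tr Z) = k%:R \/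
    complex.Re (\tr Z) <= k%:R /\ (forall j, 0 <= spectral_re A j) ->
  complex.Re (\tr (Z *m A)) <= eigsum A k.
Proof.
move=> hA oZ kn trZ; set U := spectralmx A.
have UU := unitarymx_trC_mul (spectral_unitarymx A).
have oW : orth_proj (U *m Z *m U^t*) by exact: orth_proj_unitary_conj.
have trW : \tr (U *m Z *m U^t*) = \tr Z.
  by rewrite mxtrace_mulC mulmxA UU mul1mx.
rewrite -trW /mxtrace cRe_sum in trZ.
rewrite Re_trace_mul_hermitian //; apply: weighted_sum_le_top_sum => // j.
exact: orth_proj_diag_bounds.
Qed.

Lemma eigsum_full n (A : 'M[C]_n) : A \is hermsymmx ->
  eigsum A n = complex.Re (\tr A).
Proof.
move=> hA; rewrite /eigsum top_sumE // take_oversize ?size_top_indices //.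
rewrite (perm_big _ (perm_top_indices _)) big_enum /=.
rewrite -[A in RHS]mul1mx Re_trace_mul_hermitian //; apply: eq_bigr => j _.
have /unitarymxP UU := spectral_unitarymx A.
by rewrite mulmx1 UU mxE eqxx mul1r.
Qed.

Lemma eigval_noninc n (A : 'M[C]_n) (i j : 'I_n) :
  (i <= j)%N -> eigval A j <= eigval A i.
Proof. by move=> ij; apply: nth_sort_noninc; rewrite // size_map size_enum_ord. Qed.

Lemma eigsumE n (A : 'M[C]_n) k : (k <= n)%N ->
  eigsum A k = \sum_(i < n | (i < k)%N) eigval A i.
Proof. by move=> kn; rewrite /eigsum /top_sum (big_ord_widen n _ kn). Qed.

Lemma top_sum_eigval n (A : 'M[C]_n) k : (k <= n)%N ->
  top_sum (eigval A) k = eigsum A k.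
Proof.
by move=> kn; rewrite eigsumE // top_sum_nonincreasing //; exact: eigval_noninc.
Qed.

Lemma eigvalE n (A : 'M[C]_n) (i : 'I_n) : eigval A i = eigsum A i.+1 - eigsum A i.
Proof. by rewrite /eigsum /top_sum big_ord_recr /= addrC addrK. Qed.

End Spectral.

Section TopProj.
Variable R : rcfType.
Local Notation C := R[i].

Definition top_eigen_indices n (A : 'M[C]_n) k : seq 'I_n :=
  take k (top_indices (spectral_re A)).

Definition top_proj n (A : 'M[C]_n) k : 'M[C]_n :=
  (spectralmx A)^t* *m
  diag_mx (\row_j ((j \in top_eigen_indices A k)%:R)) *m spectralmx A.

Lemma uniq_top_eigen_indices n (A : 'M[C]_n) k : uniq (top_eigen_indices A k).
Proof. by rewrite take_uniq // sort_uniq enum_uniq. Qed.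

Lemma size_top_eigen_indices n (A : 'M[C]_n) k : (k <= n)%N ->
  size (top_eigen_indices A k) = k.
Proof. by move=> kn; rewrite size_takel ?size_top_indices. Qed.

Lemma top_proj_orth n (A : 'M[C]_n) k : orth_proj (top_proj A k).
Proof.
have oE : orth_proj (diag_mx (\row_j ((j \in top_eigen_indices A k)%:R : C))).
  split.
    rewrite hermsymmxE tr_diag_mx map_diag_mx; apply/eqP; congr diag_mx.
    by apply/rowP => j; rewrite !mxE; case: (_ \in _); rewrite ?rmorph1 ?rmorph0.
  rewrite mulmx_diag; congr diag_mx.
  by apply/rowP => j; rewrite !mxE; case: (_ \in _); rewrite ?mulr1 ?mulr0.
rewrite /top_proj -{2}(trmxCK (spectralmx A)); apply: orth_proj_unitary_conj oE.
by rewrite trmxCK; apply/unitarymxP; exact: spectral_unitarymx.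
Qed.

Lemma Re_trace_top_proj n (A : 'M[C]_n) k : (k <= n)%N ->
  complex.Re (\tr (top_proj A k)) = k%:R.
Proof.
move=> kn; have /unitarymxP UU := spectral_unitarymx A.
rewrite /top_proj mxtrace_mulC mulmxA UU mul1mx mxtrace_diag cRe_sum.
have -> : (k%:R : R) = \sum_(j <- top_eigen_indices A k) 1.
  by rewrite big_const_seq count_predT iter_addr_0 size_top_eigen_indices.
rewrite -(@sum_indicator_mul _ _ _ _ (uniq_top_eigen_indices A k)).
by apply: eq_bigr => j _; rewrite mxE mulr1; case: (_ \in _).
Qed.

Lemma Re_trace_top_proj_mul n (A Z : 'M[C]_n) k : A \is hermsymmx ->
  complex.Re (\tr (top_proj A k *m A *m Z)) =
  \sum_(j <- top_eigen_indices A k)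
    spectral_re A j * complex.Re ((spectralmx A *m Z *m (spectralmx A)^t*) j j).
Proof.
move=> hA; set U := spectralmx A; set J := top_eigen_indices A k.
have /unitarymxP UU := spectral_unitarymx A.
have PA : top_proj A k *m A =
    U^t* *m diag_mx (\row_j ((j \in J)%:R * spectral_diag A 0 j)) *m U.
  rewrite [X in _ *m X](normal_spectral_decomp (hermitian_normalmx hA)) -/U.
  rewrite /top_proj -/U !mulmxA -(mulmxA _ U) UU mulmx1.
  rewrite -[in LHS](mulmxA (U^t*)) mulmx_diag.
  by congr (_ *m diag_mx _ *m _); apply/rowP => j; rewrite !mxE.
rewrite PA mxtrace_mulC mxtrace_mul_spectral cRe_sum.
rewrite -(@sum_indicator_mul _ _ _ _ (uniq_top_eigen_indices A k)) -/J.
apply: eq_bigr => j _; rewrite !mxE spectral_diag_real //.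
by case: (j \in J); rewrite ?mul1r ?mul0r ?mulr0 ?cRe_mul_real 1?mulrC.
Qed.

Lemma kyfan_top_proj n (A : 'M[C]_n) k : A \is hermsymmx -> (k <= n)%N ->
  complex.Re (\tr (top_proj A k *m A)) = eigsum A k.
Proof.
move=> hA kn; have /unitarymxP UU := spectral_unitarymx A.
rewrite -[_ *m A]mulmx1 Re_trace_top_proj_mul // /eigsum top_sumE //.
by apply: eq_bigr => j _; rewrite mulmx1 UU mxE eqxx mulr1.
Qed.

Lemma eigsum_lipschitz n (X Y : 'M[C]_n) k eps :
  X \is hermsymmx -> Y \is hermsymmx -> (k <= n)%N ->
  (forall a b, `|complex.Re (X a b - Y a b)| <= eps /\
               `|complex.Im (X a b - Y a b)| <= eps) ->
  `|eigsum X k - eigsum Y k| <= (eps *+ 2) *+ (n * n).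
Proof.
suff le_perturb (X' Y' : 'M[C]_n) : X' \is hermsymmx -> Y' \is hermsymmx ->
    (k <= n)%N -> (forall a b, `|complex.Re (X' a b - Y' a b)| <= eps /\
                               `|complex.Im (X' a b - Y' a b)| <= eps) ->
    eigsum X' k <= eigsum Y' k + (eps *+ 2) *+ (n * n).
  move=> hX hY kn XY; have YX a b : `|complex.Re (Y a b - X a b)| <= eps /\
                                     `|complex.Im (Y a b - X a b)| <= eps.
    by rewrite -opprB cReN cImN !normrN; exact: XY.
  have := le_perturb _ _ hX hY kn XY; have := le_perturb _ _ hY hX kn YX.
  rewrite ler_norml; lra.
move=> hX hY kn XY; set P := top_proj X' k.
have oP : orth_proj P := top_proj_orth X' k.
rewrite -kyfan_top_proj // -[X' in P *m X'](subrK Y') mulmxDr mxtraceD cReD.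
rewrite addrC lerD //.
  exact: kyfan_le hY oP kn (or_introl (Re_trace_top_proj X' kn)).
have -> : eps *+ 2 *+ (n * n) = \sum_(a < n) \sum_(b < n) eps *+ 2.
  by rewrite !sumr_const !card_ord -mulrnA.
rewrite /mxtrace cRe_sum; apply: ler_sum => a _.
rewrite mxE cRe_sum; apply: ler_sum => b _.
have [Pab1 Pab2] := orth_proj_entry_bounds a b oP.
have [XYba1 XYba2] := XY b a.
by apply: cRe_mul_le; rewrite // !mxE.
Qed.

End TopProj.

Section Compression.
Variable R : rcfType.
Local Notation C := R[i].

Lemma psd_compress n (M Q : 'M[C]_n) :
  psdmx M -> orth_proj Q -> psdmx (Q *m M *m Q).
Proof.
case=> hM M_ge0 [hQ _]; move: (hM) (hQ); rewrite !hermsymmxE => /eqP Mh /eqP Qh.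
split; first by rewrite hermsymmxE !trmxC_mul Mh Qh mulmxA.
by move=> v; have := M_ge0 (v *m Q); rewrite !map_trmx trmxC_mul Qh !mulmxA.
Qed.

Lemma kyfan_compress n (M Q : 'M[C]_n) k :
  psdmx M -> orth_proj Q -> (k <= n)%N ->
  complex.Re (\tr (top_proj M k *m M *m Q)) <= eigsum (Q *m M *m Q) k.
Proof.
move=> pM oQ; case: k => [_|k kn].
  rewrite Re_trace_top_proj_mul ?pM.1 //.
  by rewrite /top_eigen_indices take0 big_nil /eigsum /top_sum big_ord0.
have [hQ QQ] := oQ; move: (hQ); rewrite hermsymmxE => /eqP Qh.
set U := spectralmx M; set W := U *m Q; set J := top_eigen_indices M k.+1.
pose j0 : 'I_n := Ordinal (leq_trans (ltn0Sn k) kn).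
pose V : 'M[C]_(k.+1, n) := \matrix_i row (nth j0 J i) W.
(* [Z] projects onto the span of the rows [u_j Q] ([u_j] the rows of [U],
   [j] in [J]): it has trace at most [k.+1], and [Re tr (Z Q M Q)] is at least
   [\sum_(j in J) lambda_j |u_j Q|^2], which is the left-hand side. *)
have [Z [oZ trZ VZ]] := orth_proj_row_space V.
have WZ l : l \in J -> row l W *m Z = row l W.
  move=> lJ; have li : (index l J < k.+1)%N.
    by rewrite -(size_top_eigen_indices M kn) index_mem.
  have rowV : row (Ordinal li) V = row l W by rewrite rowK nth_index.
  by rewrite -rowV -row_mul VZ.
have pX := psd_compress pM oQ.
apply: le_trans _ (kyfan_le pX.1 oZ kn (or_intror (conj trZ (psd_spectral_re_ge0 pX)))).
have QMQ : Q *m M *m Q = W^t* *m diag_mx (spectral_diag M) *m W.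
  rewrite {1}(normal_spectral_decomp (hermitian_normalmx pM.1)) -/U.
  by rewrite /W trmxC_mul Qh !mulmxA.
pose f l := spectral_re M l * complex.Re ((W *m Z *m W^t*) l l).
have f_ge0 l : 0 <= f l by rewrite mulr_ge0 ?psd_spectral_re_ge0 ?orth_proj_quad_ge0.
rewrite Re_trace_top_proj_mul ?pM.1 // -/U -/J QMQ mxtrace_mul_spectral cRe_sum.
rewrite [X in _ <= X](eq_bigr f) => [|l _]; last first.
  by rewrite spectral_diag_real ?pM.1 // cRe_mul_real mulrC.
apply: (@le_trans _ _ (\sum_(l <- J) f l)); last first.
  rewrite -(@sum_indicator_mul _ _ _ _ (uniq_top_eigen_indices M k.+1)) -/J.
  by apply: ler_sum => l _; case: (l \in J); rewrite ?mul1r ?mul0r.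
rewrite le_eqVlt; apply/orP; left; apply/eqP.
apply: eq_big_seq => l lJ; rewrite /f [in RHS]mulmx_trC_diag WZ //.
by rewrite /W row_mul trmxC_mul Qh !mulmxA -(mulmxA _ Q Q) QQ mulmx_trC_diag.
Qed.

Lemma eigsum_compress_bounds n (M Q : 'M[C]_n) k :
  psdmx M -> orth_proj Q -> (k <= n)%N ->
  0 <= eigsum (Q *m M *m Q) k <= eigsum M n.
Proof.
move=> pM oQ kn; have pX := psd_compress pM oQ.
have X_ge0 := psd_spectral_re_ge0 pX.
apply/andP; split; first exact: top_sum_ge0.
apply: (@le_trans _ _ (eigsum (Q *m M *m Q) n)); first exact: top_sum_mono.
rewrite eigsum_full ?pX.1 // mxtrace_mulC mulmxA oQ.2.
apply: (kyfan_le pM.1 oQ (leqnn n)); right.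
by split; [exact: Re_trace_orth_proj_le oQ | exact: psd_spectral_re_ge0 pM].
Qed.

End Compression.

Lemma floor_grid_err (R : archiRealFieldType) m (x : R) :
  `|(Num.floor (m.+1%:R * x))%:~R / m.+1%:R - x| <= m.+1%:R^-1.
Proof.
set c : R := m.+1%:R; have c_gt0 : 0 < c by rewrite ltr0n.
have := floor_itv (c * x); rewrite intrD => /andP[lo hi].
set y : R := (Num.floor _)%:~R in lo hi *.
have -> : y / c - x = (y - c * x) / c.
  by rewrite mulrBl mulrAC divff ?mul1r // gt_eqF.
rewrite normrM [`|c^-1|]gtr0_norm ?invr_gt0 // -[X in _ <= X]mul1r.
by rewrite ler_pM2r ?invr_gt0 // ler_norml; apply/andP; split; lra.
Qed.

Section LipschitzMeasurable.
Local Open Scope classical_set_scope.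
Context d (T : measurableType d) (R : realType).

Lemma measurable_fun_floor_comp (K : finType) (f : K -> T -> R)
    (G : {ffun K -> int} -> R) :
  (forall k, measurable_fun setT (f k)) ->
  measurable_fun setT (fun w => G [ffun k => Num.floor (f k w)]).
Proof.
move=> mf _ Y mY; rewrite setTI.
pose S (c : {ffun K -> int}) :=
  \bigcap_(k in [set: K]) f k @^-1` `[(c k)%:~R, (c k + 1)%:~R[.
have mS c : measurable (S c).
  apply: fin_bigcap_measurable => [|k _]; first exact: finite_finset.
  by rewrite -[X in measurable X]setTI; apply: mf => //; exact: measurable_itv.
have SE c w : S c w <-> [ffun k => Num.floor (f k w)] = c.
  split=> [Sw|<- k _]; last by rewrite /= in_itv /= ffunE; exact: floor_itv.
  apply/ffunP => k; rewrite ffunE; apply: floor_def.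
  by have := Sw k I; rewrite /= in_itv.
have -> : (fun w => G [ffun k => Num.floor (f k w)]) @^-1` Y =
          \bigcup_c (if `[< Y (G c) >] then S c else set0).
  apply/seteqP; split => w /=.
    move=> Yw; exists [ffun k => Num.floor (f k w)] => //.
    by rewrite asboolT //; apply/SE.
  by case=> c _; case: ifP => // /asboolP Yc /SE cE; rewrite cE.
apply: countable_bigcupT_measurable => [|c]; first exact: countableP.
by case: ifP => _; [exact: mS | exact: measurable0].
Qed.

Lemma measurable_fun_lipschitz_comp (K : finType) (f : K -> T -> R)
    (G : (K -> R) -> R) (L : R) :
  (forall k, measurable_fun setT (f k)) ->
  (forall x y eps, (forall k, `|x k - y k| <= eps) -> `|G x - G y| <= L * eps) ->
  measurable_fun setT (fun w => G (fun k => f k w)).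
Proof.
move=> mf G_lip.
(* Rounding to the grid [m.+1%:R^-1 * Z] yields approximants depending on [w]
   only through finitely many floors. *)
pose grid m (x : R) : R := (Num.floor (m.+1%:R * x))%:~R / m.+1%:R.
apply: (@measurable_fun_cvg _ _ _ _ (fun m w => G (fun k => grid m (f k w)))).
  move=> m; suff -> : (fun w => G (fun k => grid m (f k w))) =
      (fun w => G (fun k => ([ffun k => Num.floor (m.+1%:R * f k w)] k)%:~R / m.+1%:R)).
    have mf' k : measurable_fun setT (fun w => m.+1%:R * f k w).
      by apply: measurable_funM => //; exact: measurable_cst.
    exact: (measurable_fun_floor_comp (fun c => G (fun k => (c k)%:~R / m.+1%:R)) mf').
  by apply/funext => w; congr G; apply/funext => k; rewrite ffunE.
move=> w _; have err m : `|G (fun k => grid m (f k w)) - G (fun k => f k w)| <=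
                          harmonic m * L.
  by rewrite mulrC; apply: G_lip => k; exact: floor_grid_err.
apply: (@squeeze_cvgr _ _ _ _ (fun m => G (fun k => f k w) - harmonic m * L)
                               (fun m => G (fun k => f k w) + harmonic m * L)).
- by apply: nearW => m; have := err m; rewrite ler_norml; lra.
- rewrite -[X in _ --> X]subr0 -(mul0r L); apply: cvgB; first exact: cvg_cst.
  by apply: cvgMr_tmp; exact: cvg_harmonic.
- rewrite -[X in _ --> X]addr0 -(mul0r L); apply: cvgD; first exact: cvg_cst.
  by apply: cvgMr_tmp; exact: cvg_harmonic.
Qed.

End LipschitzMeasurable.

Section ComplexMeasurable.
Local Open Scope classical_set_scope.
Context d (T : measurableType d) (R : realType).
Local Notation C := R[i].

Definition cmeasurable (f : T -> C) :=
  measurable_fun setT (fun w => complex.Re (f w)) /\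
  measurable_fun setT (fun w => complex.Im (f w)).

Lemma cmeasurable_cst (c : C) : cmeasurable (fun _ => c).
Proof. by split; exact: measurable_cst. Qed.

Lemma cmeasurableM (f g : T -> C) :
  cmeasurable f -> cmeasurable g -> cmeasurable (fun w => f w * g w).
Proof.
move=> [mf1 mf2] [mg1 mg2]; split.
  have -> : (fun w => complex.Re (f w * g w)) =
      ((fun w => complex.Re (f w)) \* (fun w => complex.Re (g w))) \-
      ((fun w => complex.Im (f w)) \* (fun w => complex.Im (g w))).
    by apply/funext => w; exact: cReM.
  by apply: measurable_funB; exact: measurable_funM.
have -> : (fun w => complex.Im (f w * g w)) =
    ((fun w => complex.Re (f w)) \* (fun w => complex.Im (g w))) \+
    ((fun w => complex.Im (f w)) \* (fun w => complex.Re (g w))).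
  by apply/funext => w; exact: cImM.
by apply: measurable_funD; exact: measurable_funM.
Qed.

Lemma cmeasurable_sum (I : Type) (s : seq I) (F : I -> T -> C) :
  (forall i, cmeasurable (F i)) -> cmeasurable (fun w => \sum_(i <- s) F i w).
Proof.
move=> mF; split.
  have -> : (fun w => complex.Re (\sum_(i <- s) F i w)) =
            (fun w => \sum_(i <- s) complex.Re (F i w)).
    by apply/funext => w; rewrite cRe_sum.
  by apply: measurable_sum => i; case: (mF i).
have -> : (fun w => complex.Im (\sum_(i <- s) F i w)) =
          (fun w => \sum_(i <- s) complex.Im (F i w)).
  by apply/funext => w; rewrite cIm_sum.
by apply: measurable_sum => i; case: (mF i).
Qed.

Lemma cmeasurable_compress n (Q : T -> 'M[C]_n) (M : 'M[C]_n) :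
  (forall a b, cmeasurable (fun w => Q w a b)) ->
  forall a b, cmeasurable (fun w => (Q w *m M *m Q w) a b).
Proof.
move=> mQ a b; have -> : (fun w => (Q w *m M *m Q w) a b) =
    (fun w => \sum_c (\sum_e Q w a e * M e c) * Q w c b).
  by apply/funext => w; rewrite mxE; apply: eq_bigr => c _; rewrite mxE.
apply: cmeasurable_sum => c; apply: cmeasurableM => //.
by apply: cmeasurable_sum => e; apply: cmeasurableM => //; exact: cmeasurable_cst.
Qed.

End ComplexMeasurable.

Section HermitianParts.
Variable R : rcfType.
Local Notation C := R[i].

Definition mx_parts n (X : 'M[C]_n) (p : 'I_n * 'I_n * bool) : R :=
  if p.2 then complex.Im (X p.1.1 p.1.2) else complex.Re (X p.1.1 p.1.2).

(* Symmetrised so that it is Hermitian for every [x], not only for the parts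
   of a Hermitian matrix: [eigsum] is Lipschitz on Hermitian matrices only. *)
Definition herm_of_parts n (x : 'I_n * 'I_n * bool -> R) : 'M[C]_n :=
  \matrix_(a, b) Complex ((x (a, b, false) + x (b, a, false)) / 2)
                         ((x (a, b, true) - x (b, a, true)) / 2).

Lemma herm_of_parts_herm n (x : 'I_n * 'I_n * bool -> R) :
  herm_of_parts x \is hermsymmx.
Proof.
rewrite hermsymmxE; apply/eqP/matrixP => a b; rewrite !mxE.
by apply/eqP; rewrite eq_complex /=; apply/andP; split; apply/eqP; lra.
Qed.

Lemma mx_partsK n (X : 'M[C]_n) : X \is hermsymmx -> herm_of_parts (mx_parts X) = X.
Proof.
rewrite hermsymmxE => /eqP hX; apply/matrixP => a b; rewrite mxE /mx_parts /=.
have -> : X b a = (X a b)^* by rewrite -{1}hX !mxE.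
rewrite cReJ cImJ; case: (X a b) => re im /=.
by congr Complex; lra.
Qed.

Lemma herm_of_parts_lipschitz n (x y : 'I_n * 'I_n * bool -> R) eps :
  (forall p, `|x p - y p| <= eps) -> forall a b,
  `|complex.Re (herm_of_parts x a b - herm_of_parts y a b)| <= eps /\
  `|complex.Im (herm_of_parts x a b - herm_of_parts y a b)| <= eps.
Proof.
move=> xy a b; rewrite !mxE cReD cImD cReN cImN /=.
have := xy (a, b, false); have := xy (b, a, false).
have := xy (a, b, true); have := xy (b, a, true); rewrite !ler_norml.
by move=> /andP[? ?] /andP[? ?] /andP[? ?] /andP[? ?]; split; apply/andP; split; lra.
Qed.

End HermitianParts.

Lemma measurable_eigsum d (T : measurableType d) (R : realType) n
    (X : T -> 'M[R[i]]_n) k :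
  (k <= n)%N -> (forall w, X w \is hermsymmx) ->
  (forall a b, cmeasurable (fun w => X w a b)) ->
  measurable_fun setT (fun w => eigsum (X w) k).
Proof.
move=> kn hX mX.
have -> : (fun w => eigsum (X w) k) =
          (fun w => eigsum (herm_of_parts (fun p => mx_parts (X w) p)) k).
  by apply/funext => w; rewrite mx_partsK.
apply: (measurable_fun_lipschitz_comp (f := fun p w => mx_parts (X w) p)
  (G := fun x => eigsum (herm_of_parts x) k) (L := (2 * (n * n))%:R)).
  by move=> [[a b] []]; case: (mX a b).
move=> x y eps xy; rewrite mulr_natl mulrnA.
apply: eigsum_lipschitz; rewrite ?herm_of_parts_herm //.
exact: herm_of_parts_lipschitz.
Qed.

Section RealIntegrable.
Local Open Scope classical_set_scope.
Context d (T : measurableType d) (R : realType) (P : probability T R).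

Lemma Rintegrable_bounded (f : T -> R) K : measurable_fun setT f ->
  (forall w, `|f w| <= K) -> P.-integrable setT (EFin \o f).
Proof.
move=> mf f_le; apply: measurable_bounded_integrable => //.
  by rewrite /= probability_setT ltry.
exists K; split; first by rewrite num_real.
by move=> K' KK' w _; exact: le_trans (f_le w) (ltW KK').
Qed.

Lemma RintegrableZl (c : R) (f : T -> R) : P.-integrable setT (EFin \o f) ->
  P.-integrable setT (EFin \o fun w => c * f w).
Proof.
move=> If; have -> : EFin \o (fun w => c * f w) = (fun w => c%:E * (f w)%:E)%E.
  by apply/funext => w; rewrite /= EFinM.
exact: (integrableZl measurableT c If).
Qed.

Lemma RintegrableB (f g : T -> R) : P.-integrable setT (EFin \o f) ->
  P.-integrable setT (EFin \o g) -> P.-integrable setT (EFin \o fun w => f w - g w).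
Proof.
move=> If Ig; have -> : EFin \o (fun w => f w - g w) = (fun w => (f w)%:E - (g w)%:E)%E.
  by apply/funext => w; rewrite /= EFinB.
exact: (integrableB measurableT If Ig).
Qed.

Lemma Rintegrable_sum (I : Type) (s : seq I) (p : pred I) (F : I -> T -> R) :
  (forall i, P.-integrable setT (EFin \o F i)) ->
  P.-integrable setT (EFin \o fun w => \sum_(i <- s | p i) F i w).
Proof.
move=> IF; have -> : EFin \o (fun w => \sum_(i <- s | p i) F i w) =
                     (fun w => \sum_(i <- s | p i) (F i w)%:E).
  by apply/funext => w; rewrite /= sumEFin.
exact: (integrable_sum measurableT s (fun i _ => IF i)).
Qed.

Lemma Rintegral_sum (I : Type) (s : seq I) (p : pred I) (F : I -> T -> R) :
  (forall i, P.-integrable setT (EFin \o F i)) ->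
  \int[P]_w (\sum_(i <- s | p i) F i w) = \sum_(i <- s | p i) \int[P]_w F i w.
Proof.
move=> IF; elim: s => [|a s IH].
  by under eq_Rintegral do rewrite big_nil; rewrite big_nil Rintegral_cst // mul0r.
under eq_Rintegral do rewrite big_cons; rewrite big_cons -IH.
case: (p a); last by [].
by rewrite RintegralD //; exact: Rintegrable_sum.
Qed.

End RealIntegrable.

Section StochasticBlockDecomposition.
Local Open Scope classical_set_scope.
Context d (T : measurableType d) (R : realType) (P : probability T R).
Variables (n : nat) (alpha : R) (Q : T -> 'M[R[i]]_n).
Hypothesis sQ : stoch_block_decomp P alpha Q.

Lemma sbd_orth_proj w : orth_proj (Q w).
Proof. by case: sQ. Qed.

Lemma sbd_cmeasurable a b : cmeasurable (fun w => Q w a b).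
Proof. by case: sQ => mQ _ _; exact: mQ. Qed.

Lemma sbd_integrable a b :
  P.-integrable setT (EFin \o fun w => complex.Re (Q w a b)) /\
  P.-integrable setT (EFin \o fun w => complex.Im (Q w a b)).
Proof.
have [mRe mIm] := sbd_cmeasurable a b.
have bounds w := orth_proj_entry_bounds a b (sbd_orth_proj w).
by split; apply: (Rintegrable_bounded _ (K := 1)) => // w; case: (bounds w).
Qed.

Lemma sbd_expect a b :
  \int[P]_w complex.Re (Q w a b) = alpha^-1 *+ (a == b) /\
  \int[P]_w complex.Im (Q w a b) = 0.
Proof.
case: sQ => _ _ /(congr1 (fun A : 'M[R[i]]_n => A a b)); rewrite !mxE /cexpect.
by case: (a == b) => -[-> ->].
Qed.

Lemma integrable_Re_trace_mul (A : 'M[R[i]]_n) :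
  P.-integrable setT (EFin \o fun w => complex.Re (\tr (A *m Q w))).
Proof.
have -> : (fun w => complex.Re (\tr (A *m Q w))) = (fun w => \sum_(p : 'I_n * 'I_n)
    (complex.Re (A p.1 p.2) * complex.Re (Q w p.2 p.1) -
     complex.Im (A p.1 p.2) * complex.Im (Q w p.2 p.1))).
  by apply/funext => w; rewrite Re_trace_mulE.
apply: Rintegrable_sum => p; have [IRe IIm] := sbd_integrable p.2 p.1.
by apply: RintegrableB; exact: RintegrableZl.
Qed.

Lemma expect_Re_trace_mul (A : 'M[R[i]]_n) :
  \int[P]_w complex.Re (\tr (A *m Q w)) = alpha^-1 * complex.Re (\tr A).
Proof.
under eq_Rintegral do rewrite Re_trace_mulE.
rewrite Rintegral_sum => [|p]; last first.
  have [IRe IIm] := sbd_integrable p.2 p.1.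
  by apply: RintegrableB; exact: RintegrableZl.
transitivity (\sum_(p : 'I_n * 'I_n)
                complex.Re (A p.1 p.2) * (alpha^-1 *+ (p.2 == p.1))).
  apply: eq_bigr => p _; have [IRe IIm] := sbd_integrable p.2 p.1.
  have [ERe EIm] := sbd_expect p.2 p.1.
  by rewrite RintegralB ?RintegralZl ?ERe ?EIm ?mulr0 ?subr0 //; exact: RintegrableZl.
rewrite -(pair_big xpredT xpredT
  (fun a b => complex.Re (A a b) * (alpha^-1 *+ (b == a)))).
rewrite /mxtrace cRe_sum mulr_sumr; apply: eq_bigr => a _ /=.
rewrite (bigD1 a) //= eqxx mulr1n big1 ?addr0 1?mulrC // => b /negbTE ->.
by rewrite mulr0n mulr0.
Qed.

Hypothesis alpha_gt0 : 0 < alpha.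
Variable M : 'M[R[i]]_n.
Hypothesis pM : psdmx M.
Local Notation X w := (Q w *m M *m Q w).

Lemma integrable_eigsum_compress k : (k <= n)%N ->
  P.-integrable setT (EFin \o fun w => eigsum (X w) k).
Proof.
move=> kn; apply: (Rintegrable_bounded _ (K := eigsum M n)).
  apply: measurable_eigsum => // [w|].
    exact: (psd_compress pM (sbd_orth_proj w)).1.
  exact: cmeasurable_compress sbd_cmeasurable.
move=> w; have /andP[ge0 le] := eigsum_compress_bounds pM (sbd_orth_proj w) kn.
by rewrite ger0_norm.
Qed.

Lemma integrable_eigval_compress (i : 'I_n) :
  P.-integrable setT (EFin \o fun w => eigval (X w) i).
Proof.
have -> : (fun w => eigval (X w) i) = (fun w => eigsum (X w) i.+1 - eigsum (X w) i).
  by apply/funext => w; rewrite eigvalE.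
by apply: RintegrableB; apply: integrable_eigsum_compress; rewrite // ltnW.
Qed.

Lemma expect_eigsum_compress_ge k : (k <= n)%N ->
  eigsum M k <= alpha * \int[P]_w eigsum (X w) k.
Proof.
move=> kn; rewrite -kyfan_top_proj ?pM.1 //.
rewrite -[E in E <= _](mulVKf (lt0r_neq0 alpha_gt0)) -expect_Re_trace_mul ler_pM2l //.
apply: le_Rintegral => //; first exact: integrable_Re_trace_mul.
  exact: integrable_eigsum_compress.
by move=> w _; exact: kyfan_compress (sbd_orth_proj w) kn.
Qed.

Lemma expect_eigsum_compress_full : eigsum M n = alpha * \int[P]_w eigsum (X w) n.
Proof.
have trX w : eigsum (X w) n = complex.Re (\tr (M *m Q w)).
  rewrite eigsum_full ?(psd_compress pM (sbd_orth_proj w)).1 //.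
  by rewrite mxtrace_mulC mulmxA (sbd_orth_proj w).2 mxtrace_mulC.
rewrite (eq_Rintegral _ (fun w _ => trX w)) expect_Re_trace_mul mulVKf ?lt0r_neq0 //.
exact: eigsum_full pM.1.
Qed.

Lemma top_sum_expect_eigval k : (k <= n)%N ->
  top_sum (fun j => alpha * \int[P]_w eigval (X w) j) k =
  alpha * \int[P]_w eigsum (X w) k.
Proof.
move=> kn; rewrite top_sum_nonincreasing //; last first.
  move=> i j ij; rewrite ler_pM2l //; apply: le_Rintegral => //;
    try exact: integrable_eigval_compress.
  by move=> w _; exact: eigval_noninc.
rewrite -mulr_sumr -Rintegral_sum; last exact: integrable_eigval_compress.
by congr (_ * _); apply: eq_Rintegral => w _; rewrite eigsumE.
Qed.

End StochasticBlockDecomposition.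

Theorem lemma2p10 (d : measure_display) (T : measurableType d) (R : realType)
    (P : probability T R) (n : nat) (alpha : R) (Q : T -> 'M[R[i]]_n)
    (M : 'M[R[i]]_n) :
  0 < alpha ->
  psdmx M ->
  stoch_block_decomp P alpha Q ->
  majorized (fun j => eigval M j)
            (fun j => alpha * \int[P]_w eigval (Q w *m M *m Q w) j).
Proof.
move=> alpha_gt0 pM sQ; apply: majorized_top_sum => [k kn|].
  rewrite top_sum_eigval // top_sum_expect_eigval //.
  exact: expect_eigsum_compress_ge.
rewrite top_sum_eigval // top_sum_expect_eigval //.
exact: expect_eigsum_compress_full.
Qed.
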